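(* For every positive integer $\alpha$: there is no function $f$ such that $\mathrm{stcw}(G)\le f(\mathrm{ecrw}_\alpha(G))$ for all graphs $G$, and there is no function $f$ such that $\mathrm{tcw}(G)\le f(\mathrm{ecrw}_\alpha(G))$ for all graphs $G$.
   Context: A tree-cut decomposition of a graph $G$ is a pair $\mathcal{T}=(T,\{X_t\}_{t\in V(T)})$ where $T$ is a tree and the bags $X_t\subseteq V(G)$ are pairwise disjoint (possibly empty) with $\bigcup_{t\in V(T)}X_t=V(G)$. For a node $t$ of $T$, let $T_1,\dots,T_m$ be the connected components of $T-t$ and $Z_i=\bigcup_{s\in V(T_i)}X_s$; $\mathrm{cross}_{\mathcal{T}}(t)$ is the number of edges of $G$ whose two endpoints lie in two distinct sets among $Z_1,\dots,Z_m$ (if $T$ has one node, $\mathrm{cross}_{\mathcal T}(t)=0$). The crossing number of $\mathcal{T}$ is $\max_{t}\mathrm{cross}_{\mathcal{T}}(t)$, and the thickness of $\mathcal{T}$ is $\max_t|X_t|$. $\mathrm{ecrw}_\alpha(G)$ is the minimum crossing number over tree-cut decompositions of $G$ of thickness at most $\alpha$. For an edge $uv$ of $T$, the adhesion $\mathrm{adh}_{\mathcal T}(uv)$ is the set of edges of $G$ joining $\bigcup_{s\in V(T_{uv,u})}X_s$ and $\bigcup_{s\in V(T_{uv,v})}X_s$, where $T_{uv,u},T_{uv,v}$ are the components of $T-uv$ containing $u,v$. The torso $H_t$ at $t$ is $G$ if $|V(T)|=1$, and otherwise is obtained from $G$ by consolidating each $Z_i$ into a single vertex $z_i$ (replace $Z_i$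 by $z_i$ and, for each edge between $Z_i$ and $v\notin Z_i$, add an edge $z_iv$; multi-edges allowed). The 3-center $\widetilde{H_t}$ is obtained from $H_t$ by exhaustively suppressing vertices of $V(H_t)\setminus X_t$ of degree at most 2 (suppressing $v$: delete $v$, and if it had degree exactly 2 add an edge between its two neighbours). The 2-center $\widehat{H_t}$ is obtained from $H_t$ by removing the vertices of $V(H_t)\setminus X_t$ of degree 1 in $H_t$. The tree-cut width of $\mathcal T$ is $\max(\max_{uv\in E(T)}|\mathrm{adh}_{\mathcal T}(uv)|,\max_{t}|V(\widetilde{H_t})|)$ and the slim tree-cut width of $\mathcal T$ is $\max(\max_{uv\in E(T)}|\mathrm{adh}_{\mathcal T}(uv)|,\max_{t}|V(\widehat{H_t})|)$; $\mathrm{tcw}(G)$ and $\mathrm{stcw}(G)$ are the respective minima over all tree-cut decompositions of $G$. *)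

From mathcomp Require Import all_boot.
Set Implicit Arguments. Unset Strict Implicit. Unset Printing Implicit Defensive.

Section Defs.

Definition simple_graph (V : finType) (e : rel V) : Prop :=
  symmetric e /\ irreflexive e.

(* A (finite, nonempty) tree on node type N with adjacency tadj:
   symmetric, irreflexive, connected, with |E| = |N| - 1
   (ordered adjacent pairs counted, hence the doubling). *)
Definition is_tree (N : finType) (tadj : rel N) : Prop :=
  [/\ symmetric tadj, irreflexive tadj, 0 < #|N|,
      (forall x y, connect tadj x y) &
      #|[set p : N * N | tadj p.1 p.2]| = (#|N|).-1.*2 ].

(* A tree-cut decomposition of G = (V,e) is a tree (N,tadj) together with
   a map phi : V -> N; the bag X_t is phi^-1(t).  Bags are then pairwise
   disjoint, possibly empty, and cover V. *)
Definition tree_cut_dec (V N : finType) (tadj : rel N) (phi : V -> N) : Prop :=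
  is_tree tadj.

Variables (V N : finType) (e : rel V) (tadj : rel N) (phi : V -> N).

Definition bag (t : N) : {set V} := [set v | phi v == t].

Definition del_node (t : N) : rel N :=
  fun x y => [&& tadj x y, x != t & y != t].

(* cross_T(t): edges of G whose endpoints lie in two distinct components of
   T - t (ordered pairs counted, then halved). *)
Definition cross (t : N) : nat :=
  #|[set p : V * V | [&& e p.1 p.2, phi p.1 != t, phi p.2 != t &
                        ~~ connect (del_node t) (phi p.1) (phi p.2)]]| %/ 2.

Definition thickness_le (alpha : nat) : Prop := forall t, #|bag t| <= alpha.
Definition crossing_le (k : nat) : Prop := forall t, cross t <= k.

Definition del_edge (u v : N) : rel N :=
  fun x y => tadj x y && ~~ (((x == u) && (y == v)) || ((x == v) && (y == u))).

Definition adh (u v : N) : nat :=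
  #|[set p : V * V | [&& e p.1 p.2, connect (del_edge u v) u (phi p.1) &
                        connect (del_edge u v) v (phi p.2)]]|.

(* Vertex type of the torso at t: inl x for x in X_t, inr s for each
   neighbour s of t in T (s represents the component Z_s of T - t
   containing s, which becomes the consolidated vertex z_s). *)
Definition TV := (V + N)%type.

Definition belongs (t : N) (x : V) (a : TV) : bool :=
  match a with
  | inl u => (phi x == t) && (x == u)
  | inr s => [&& tadj t s, phi x != t & connect (del_node t) s (phi x)]
  end.

End Defs.

(* A multigraph: alive vertex set and a symmetric multiplicity function
   (mult a a = number of loops at a). *)
Record mgraph (W : finType) := MG { alive : {set W}; mult : W -> W -> nat }.

Definition deg (W : finType) (M : mgraph W) (a : W) : nat :=
  \sum_(b : W) mult M a b + mult M a a.

(* suppression of vertex v: delete v; if deg v = 2, add an edge between its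
   two neighbours (a loop if both edges go to the same neighbour). *)
Definition suppress (W : finType) (M : mgraph W) (v : W) : mgraph W :=
  MG (alive M :\ v)
     (fun a b => if (a == v) || (b == v) then 0 else
        mult M a b +
        ((deg M v == 2) &&
         (if a == b then mult M v a == 2
          else (mult M v a == 1) && (mult M v b == 1)))).

Definition suppressible (W : finType) (keep : {set W}) (M : mgraph W) (v : W) :=
  [&& v \in alive M, v \notin keep & deg M v <= 2].

(* reduces keep M n: some exhaustive sequence of suppressions of
   vertices outside keep, applied to M, ends with a multigraph on n vertices *)
Inductive reduces (W : finType) (keep : {set W}) : mgraph W -> nat -> Prop :=
  | red_stop M : (forall v, ~~ suppressible keep M v) -> reduces keep M #|alive M|
  | red_step M v n : suppressible keep M v -> reduces keep (suppress M v) n ->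
                     reduces keep M n.

Section Torso.
Variables (V N : finType) (e : rel V) (tadj : rel N) (phi : V -> N).

(* The torso H_t (if T has one node, this is G itself). *)
Definition torso (t : N) : mgraph (TV V N) :=
  MG ([set a : TV V N | match a with inl u => phi u == t
                                    | inr s => tadj t s end])
     (fun a b => if a == b then 0 else
        #|[set p : V * V | [&& e p.1 p.2, belongs tadj phi t p.1 a &
                               belongs tadj phi t p.2 b]]|).

Definition keepX : {set TV V N} := [set a | if a is inl _ then true else false].

(* size of the 2-center: remove vertices outside X_t of degree 1 in H_t *)
Definition two_center_size (t : N) : nat :=
  #|[set a in alive (torso t) | (a \in keepX) || (deg (torso t) a != 1)]|.

(* tree-cut width of the decomposition is <= w (the 3-center is the result
   of an exhaustive suppression sequence) *)
Definition tcw_dec_le (w : nat) : Prop :=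
  (forall u v, tadj u v -> adh e tadj phi u v <= w) /\
  (forall t, exists n, reduces keepX (torso t) n /\ n <= w).

Definition stcw_dec_le (w : nat) : Prop :=
  (forall u v, tadj u v -> adh e tadj phi u v <= w) /\
  (forall t, two_center_size t <= w).

End Torso.

Definition ecrw_le (alpha : nat) (V : finType) (e : rel V) (k : nat) : Prop :=
  exists (N : finType) (tadj : rel N) (phi : V -> N),
    [/\ tree_cut_dec tadj phi, thickness_le phi alpha & crossing_le e tadj phi k].

Definition is_ecrw (alpha : nat) (V : finType) (e : rel V) (k : nat) : Prop :=
  ecrw_le alpha e k /\ forall k', ecrw_le alpha e k' -> k <= k'.

Definition tcw_le (V : finType) (e : rel V) (w : nat) : Prop :=
  exists (N : finType) (tadj : rel N) (phi : V -> N),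
    tree_cut_dec tadj phi /\ tcw_dec_le e tadj phi w.

Definition is_tcw (V : finType) (e : rel V) (w : nat) : Prop :=
  tcw_le e w /\ forall w', tcw_le e w' -> w <= w'.

Definition stcw_le (V : finType) (e : rel V) (w : nat) : Prop :=
  exists (N : finType) (tadj : rel N) (phi : V -> N),
    tree_cut_dec tadj phi /\ stcw_dec_le e tadj phi w.

Definition is_stcw (V : finType) (e : rel V) (w : nat) : Prop :=
  stcw_le e w /\ forall w', stcw_le e w' -> w <= w'.

From mathcomp Require Import all_boot zify.
From Stdlib Require Import Classical.
Set Implicit Arguments. Unset Strict Implicit. Unset Printing Implicit Defensive.

(* The witnesses are the bouquets B_n: n copies of K4 sharing one vertex,
   the hub.  Taking T = a spanning tree of B_n (each block a path hanging
   from the hub) with singleton bags shows ecrw_alpha(B_n) <= 8: an edge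
   crossing at t has both ends among the hub and the block of t.
   Conversely, let a decomposition of B_n have adhesions <= w, and look at
   the torso at the node t0 of the hub.  Its "essential" vertices (those
   whose part of B_n is nonempty) cover V(B_n); a part is either a single
   bag vertex or a branch Z_s, and |Z_s| <= |adh(t0 s)| <= w since all of
   Z_s is adjacent to the hub.  Every branch vertex with nonempty part has
   degree >= 3, and the other torso vertices are isolated, so all essential
   vertices survive in both the 2-center and the 3-center; hence there are
   at most w of them and 3n + 1 <= w^2.  Choosing n = M^2 with
   M = max_{k <= 8} f k contradicts any bound w <= f(ecrw_alpha). *)

Lemma exists_minimum (P : nat -> Prop) :
  (exists n, P n) -> exists k, P k /\ forall k', P k' -> k <= k'.
Proof.
case=> n Pn; elim: n {-2}n (leqnn n) Pn => [|m IH] n le_nm Pn.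
  by exists n; split=> // k' _; move: le_nm; rewrite leqn0 => /eqP ->.
have [[k' [Pk' lt_k'n]]|no_smaller] := classic (exists k', P k' /\ k' < n).
  by apply: (IH k') => //; rewrite -ltnS (leq_trans lt_k'n le_nm).
exists n; split=> // k' Pk'; rewrite leqNgt; apply/negP => lt_k'n.
by apply: no_smaller; exists k'.
Qed.

Lemma card_bigcup_leq (I T : finType) (P : {pred I}) (F : I -> {set T}) :
  #|\bigcup_(i in P) F i| <= \sum_(i in P) #|F i|.
Proof.
elim/big_rec2: _ => [|i A m _ IH]; first by rewrite cards0.
by apply: leq_trans (leq_card_setU _ _) _; rewrite leq_add2l.
Qed.

Lemma reduces_exists (W : finType) (keep : {set W}) (M : mgraph W) :
  exists n, reduces keep M n /\ n <= #|alive M|.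
Proof.
have [m lt_M] := ubnP #|alive M|; elim: m M lt_M => // m IH M lt_M.
case: (pickP (suppressible keep M)) => [v supp_v|stuck]; last first.
  by exists #|alive M|; split=> //; apply: red_stop => v; rewrite stuck.
have v_alive : v \in alive M by case/and3P: supp_v.
have shrink : #|alive (suppress M v)| < #|alive M|.
  by rewrite /= (cardsD1 v (alive M)) v_alive.
have [n [red_n le_n]] := IH _ (leq_trans shrink lt_M).
by exists n; split; [exact: red_step red_n | exact: leq_trans le_n (ltnW shrink)].
Qed.

(* Lower bound on the result of any exhaustive suppression sequence: if
   all vertices outside S are isolated and every vertex of S is kept or has
   degree > 2, no vertex of S is ever suppressed (suppressions happen only
   at isolated vertices, which leave the rest of the multigraph unchanged). *)
Lemma reduces_lower_bound (W : finType) (keep : {set W}) M n (S : {set W}) :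
  reduces keep M n -> S \subset alive M ->
  (forall a, a \in S -> (a \in keep) || (2 < deg M a)) ->
  (forall a b, a \notin S -> mult M a b = 0 /\ mult M b a = 0) -> #|S| <= n.
Proof.
elim=> {M n} [M _|M v n supp_v _ IH] S_alive S_big isolated.
  exact: subset_leq_card.
case/and3P: supp_v => v_alive v_free v_small.
have v_out : v \notin S.
  by apply/negP => /S_big; rewrite (negbTE v_free) /= ltnNge v_small.
have deg_v : deg M v = 0.
  by rewrite /deg big1 ?(isolated v v v_out).1 // => b _; exact: (isolated v b v_out).1.
have same_mult a b : mult (suppress M v) a b = mult M a b.
  rewrite /= deg_v /=; case: eqP => [->|_] /=; first by rewrite (isolated v b v_out).1.
  by case: eqP => [->|_] /=; [rewrite (isolated v a v_out).2 | rewrite addn0].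
have same_deg a : deg (suppress M v) a = deg M a.
  by rewrite /deg same_mult; congr (_ + _); apply: eq_bigr => b _; rewrite same_mult.
apply: IH.
- apply/subsetP => a aS; rewrite !inE (subsetP S_alive a aS) andbT.
  by apply: contraNneq v_out => <-.
- by move=> a; rewrite same_deg; apply: S_big.
- by move=> a b aS; rewrite !same_mult; apply: isolated.
Qed.

Lemma path_del_node (N : finType) (tadj : rel N) t s q :
  path tadj s q -> t \notin s :: q -> path (del_node tadj t) s q.
Proof.
elim: q s => [|y q IH] s //= /andP [s_y y_q]; rewrite !inE !negb_or => /and3P [ts ty tq].
by rewrite /del_node s_y (IH y y_q) ?inE ?negb_or ?ty // eq_sym ts eq_sym ty.
Qed.

Lemma tree_branch (N : finType) (tadj : rel N) t u :
  connect tadj t u -> u != t -> exists s, tadj t s /\ connect (del_node tadj t) s u.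
Proof.
case/connectP=> p t_p ->; case: (shortenP t_p) => p' t_p' uniq_p' _.
case: p' t_p' uniq_p' => [|s q] /=; first by rewrite eqxx.
case/andP=> ts s_q; rewrite inE negb_or => /andP [/andP [t_s t_q] _] _.
exists s; split=> //; apply/connectP; exists q => //.
by apply: path_del_node; rewrite // inE negb_or t_s.
Qed.

Lemma unit_tree : is_tree (fun _ _ : unit => false).
Proof.
split=> //; first by rewrite card_unit.
  by case; case; exact: connect0.
by rewrite card_unit; apply/eqP; rewrite cards_eq0; apply/eqP/setP => p; rewrite !inE.
Qed.

(* Every graph has some finite slim tree-cut width and tree-cut width
   (all quantities involved are bounded by cardinalities of finite types). *)
Lemma stcw_finite (V : finType) (e : rel V) : exists w, stcw_le e w.
Proof.
exists (#|{: V * V}| + #|{: TV V unit}|); exists unit, (fun _ _ => false), (fun _ => tt).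
split; first exact: unit_tree.
split=> [u v _|t]; first by apply: leq_trans (max_card _) (leq_addr _ _).
by apply: leq_trans (max_card _) (leq_addl _ _).
Qed.

Lemma tcw_finite (V : finType) (e : rel V) : exists w, tcw_le e w.
Proof.
exists #|{: TV V unit}|; exists unit, (fun _ _ => false), (fun _ => tt).
split; first exact: unit_tree.
split=> [//|t].
have [m [red_m le_m]] :=
  reduces_exists (keepX V unit) (torso e (fun _ _ : unit => false) (fun _ => tt) t).
by exists m; split; last exact: leq_trans le_m (max_card _).
Qed.

Section TorsoParts.
Variables (V N : finType) (e : rel V) (tadj : rel N) (phi : V -> N) (t : N).

Definition part (a : TV V N) : {set V} := [set x | belongs tadj phi t x a].

Definition essential : {set TV V N} := [set a | part a != set0].

Let H := torso e tadj phi t.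

Lemma essential_alive : essential \subset alive H.
Proof.
apply/subsetP => a; rewrite !inE => /set0Pn [x]; rewrite inE.
by case: a => [u /andP [/eqP <- /eqP ->]|s /and3P []].
Qed.

Lemma nonessential_isolated a b :
  a \notin essential -> mult H a b = 0 /\ mult H b a = 0.
Proof.
rewrite inE negbK => /eqP part0.
have no_x x : belongs tadj phi t x a = false.
  by have := in_set0 x; rewrite -part0 /part inE.
by split; rewrite /H /=; case: eqP => // _; apply/eqP; rewrite cards_eq0;
  apply/eqP/setP => p; rewrite !inE no_x ?andbF.
Qed.

Lemma adh_ge_part s : tadj t s ->
  #|[set p : V * V | [&& e p.1 p.2, phi p.1 == t & p.2 \in part (inr s)]]|
    <= adh e tadj phi t s.
Proof.
move=> ts; apply: subset_leq_card; apply/subsetP => p.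
rewrite !inE => /and3P [ep /eqP <- /and3P [_ _ s_p2]].
rewrite ep connect0 /=; apply: connect_sub s_p2 => a b /and3P [ab at' bt].
by apply: connect1; rewrite /del_edge ab (negbTE at') (negbTE bt) !andbF.
Qed.

Hypothesis T_connected : forall x y, connect tadj x y.

Lemma belongs_somewhere x : exists a, x \in part a.
Proof.
case: (eqVneq (phi x) t) => [x_t|x_nt].
  by exists (inl x); rewrite inE /= x_t !eqxx.
have [s [ts s_x]] := tree_branch (T_connected t (phi x)) x_nt.
by exists (inr s); rewrite inE /= ts x_nt.
Qed.

Lemma card_le_parts : #|V| <= \sum_(a in essential) #|part a|.
Proof.
rewrite -cardsT; apply: leq_trans (card_bigcup_leq _ _).
apply: subset_leq_card; apply/subsetP => x _.
have [a x_a] := belongs_somewhere x.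
by apply/bigcupP; exists a => //; rewrite inE; apply/set0Pn; exists x.
Qed.

Lemma torso_deg_ge_out a :
  #|[set p : V * V | [&& e p.1 p.2, p.1 \in part a & p.2 \notin part a]]|
    <= deg H a.
Proof.
pose to b := [set p : V * V | [&& a != b, e p.1 p.2, p.1 \in part a & p.2 \in part b]].
apply: (@leq_trans #|\bigcup_(b in predT) to b|).
  apply: subset_leq_card; apply/subsetP => p; rewrite inE => /and3P [ep pa pna].
  have [b pb] := belongs_somewhere p.2.
  apply/bigcupP; exists b => //; rewrite inE ep pa pb !andbT.
  by apply: contraNneq pna => ->.
apply: leq_trans (card_bigcup_leq _ _) (leq_trans _ (leq_addr _ _)).
apply: leq_sum => b _; rewrite /H /to /=.
have [<-|_] := eqVneq a b.
  by rewrite leqn0 cards_eq0; apply/eqP/setP => p; rewrite !inE.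
by apply: subset_leq_card; apply/subsetP => p; rewrite !inE => /andP [_].
Qed.

End TorsoParts.

(* The bouquet of n copies of K4 glued at a hub: the hub None is adjacent
   to every other vertex, and the vertices Some (i, _) of block i form a
   triangle. *)
Notation BV n := (option ('I_n * 'I_3)).

Definition bouquet (n : nat) : rel (BV n) := fun x y =>
  match x, y with
  | None, Some _ | Some _, None => true
  | Some p, Some q => (p.1 == q.1) && (p.2 != q.2)
  | None, None => false
  end.

Lemma bouquet_sym n : symmetric (@bouquet n).
Proof. by case=> [[i k]|] [[j l]|] //=; rewrite eq_sym [l == k]eq_sym. Qed.

Lemma bouquet_simple n : simple_graph (@bouquet n).
Proof. by split; [exact: bouquet_sym | case=> [[i k]|] //=; rewrite !eqxx]. Qed.

Lemma card_BV n : #|{: BV n}| = (3 * n).+1.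
Proof. by rewrite card_option card_prod !card_ord mulnC. Qed.

Section BouquetLowerBound.
Variables (n : nat) (N : finType) (tadj : rel N) (phi : BV n -> N).
Hypothesis T_connected : forall x y, connect tadj x y.

Let t0 := phi None.
Let H := torso (@bouquet n) tadj phi t0.
Let part0 := part tadj phi t0.

(* A vertex x = (i, k) in a branch part Z_s has three edges leaving Z_s:
   for each j in 'I_3, the edge x-hub if j = k, and otherwise either the
   edge (i, j)-hub or the edge x-(i, j), according as (i, j) lies in Z_s. *)
Lemma branch_deg_gt2 s : inr s \in essential tadj phi t0 -> 2 < deg H (inr s).
Proof.
rewrite inE => /set0Pn [x x_s].
apply: leq_trans (torso_deg_ge_out (@bouquet n) phi t0 T_connected (inr s)).
have hub_out : None \notin part0 (inr s) by rewrite inE /= /t0 eqxx andbF.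
case: x x_s => [[i k] x_s|]; last by rewrite (negbTE hub_out).
pose x := Some (i, k) : BV n.
pose out (j : 'I_3) : BV n * BV n :=
  if j == k then (x, None)
  else if Some (i, j) \in part0 (inr s) then (Some (i, j), None) else (x, Some (i, j)).
pose index (p : BV n * BV n) : 'I_3 :=
  match p with (_, Some (_, j)) | (Some (_, j), None) => j | _ => k end.
have out_inj : injective out.
  by apply: (can_inj (g := index)) => j; rewrite /out; case: eqP => [->|_] //; case: ifP.
apply: (@leq_trans #|[set out j | j : 'I_3]|); first by rewrite card_imset ?card_ord.
apply: subset_leq_card; apply/subsetP => _ /imsetP [j _ ->]; rewrite inE /out.
case: eqP => [_|/eqP jk]; first by rewrite /= x_s hub_out.
case: ifP => [ij_s|/negbT ij_out] /=; first by rewrite ij_s hub_out.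
by rewrite eqxx x_s ij_out eq_sym jk.
Qed.

Lemma essential_robust a :
  a \in essential tadj phi t0 -> (a \in keepX (BV n) N) || (2 < deg H a).
Proof.
case: a => [u _|s s_ess]; first by rewrite inE.
by rewrite (branch_deg_gt2 s_ess) orbT.
Qed.

(* Counting: V is covered by the at most w essential parts, each of size at
   most w: a singleton for inl x, and Z_s for inr s, whose vertices are all
   adjacent to the hub in X_t0, so that |Z_s| <= |adh(t0 s)| <= w. *)
Lemma bouquet_count w :
  (forall u v, tadj u v -> adh (@bouquet n) tadj phi u v <= w) ->
  #|essential tadj phi t0| <= w -> (3 * n).+1 <= w * w.
Proof.
move=> adh_w ess_w; rewrite -card_BV.
apply: leq_trans (card_le_parts phi t0 T_connected) _.
apply: leq_trans (_ : _ <= \sum_(a in essential tadj phi t0) w) _; last first.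
  by rewrite sum_nat_const leq_mul.
apply: leq_sum => a a_ess.
have w_pos : 0 < w by apply: leq_trans ess_w; apply/card_gt0P; exists a.
case: a a_ess => [u _|s /(subsetP (essential_alive (@bouquet n) tadj phi t0)) t0s].
  apply: leq_trans (_ : _ <= #|[set u]|) _; last by rewrite cards1.
  by apply: subset_leq_card; apply/subsetP => x; rewrite !inE /belongs => /andP [_].
rewrite inE /= in t0s; apply: leq_trans (adh_w _ _ t0s).
apply: leq_trans (adh_ge_part (@bouquet n) phi t0s).
have hub_pair : injective (fun x : BV n => (None : BV n, x)) by move=> x y [].
rewrite -(card_imset _ hub_pair); apply: subset_leq_card.
apply/subsetP => _ /imsetP [x x_s ->]; rewrite inE /= x_s eqxx andbT.
by case: x x_s => [//|]; rewrite inE /= /t0 eqxx andbF.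
Qed.

End BouquetLowerBound.

(* Slim tree-cut width: the essential torso vertices survive in the
   2-center, as none of them is a non-bag vertex of degree 1. *)
Lemma bouquet_stcw_lb n w : stcw_le (@bouquet n) w -> (3 * n).+1 <= w * w.
Proof.
case=> N [tadj [phi [[_ _ _ T_connected _] [adh_w center_w]]]].
apply: (bouquet_count T_connected adh_w); apply: leq_trans (center_w (phi None)).
apply: subset_leq_card; apply/subsetP => a a_ess.
rewrite inE (subsetP (essential_alive _ _ _ _) a a_ess) /=.
case/orP: (essential_robust T_connected a_ess) => [->//|deg_big].
by rewrite gtn_eqF ?orbT // ltnW.
Qed.

(* Tree-cut width: no essential torso vertex is ever suppressed, since
   every other torso vertex is isolated. *)
Lemma bouquet_tcw_lb n w : tcw_le (@bouquet n) w -> (3 * n).+1 <= w * w.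
Proof.
case=> N [tadj [phi [[_ _ _ T_connected _] [adh_w center_w]]]].
apply: (bouquet_count T_connected adh_w).
have [m [red_m m_w]] := center_w (phi None); apply: leq_trans m_w.
apply: (reduces_lower_bound red_m (essential_alive _ _ _ _)).
  exact: essential_robust.
exact: nonessential_isolated.
Qed.

Section ParentTree.
Variables (N : finType) (root : N) (par : N -> N) (dep : N -> nat).
Hypothesis dep_par : forall x, x != root -> dep (par x) < dep x.

Definition ptree : rel N := fun a b =>
  ((a != root) && (b == par a)) || ((b != root) && (a == par b)).

Lemma ptree_sym : symmetric ptree.
Proof. by move=> a b; rewrite /ptree orbC. Qed.

Lemma ptree_par x : x != root -> ptree x (par x).
Proof. by move=> xr; rewrite /ptree xr eqxx. Qed.

Lemma climb (r : rel N) (Q : pred N) x z : Q x ->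
  (forall y, Q y -> y != z -> [&& Q (par y), y != root & r y (par y)]) ->
  connect r x z.
Proof.
move=> Qx step; have [m] := ubnP (dep x); elim: m x Qx => // m IH x Qx lt_xm.
have [-> //|xz] := eqVneq x z; case/and3P: (step x Qx xz) => Q_px xr r_x.
apply: connect_trans (connect1 r_x) (IH _ Q_px _).
exact: leq_trans (dep_par xr) (ltnSE lt_xm).
Qed.

Lemma ptree_is_tree : is_tree ptree.
Proof.
have to_root x : connect ptree x root.
  by apply: (climb (Q := predT)) => // y _ yr; rewrite yr ptree_par.
split.
- exact: ptree_sym.
- move=> a; rewrite /ptree orbb; apply/negP => /andP [ar /eqP a_pa].
  by have := dep_par ar; rewrite -a_pa ltnn.
- by apply/card_gt0P; exists root.
- move=> x y; apply: connect_trans (to_root x) _.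
  by rewrite (sym_connect_sym ptree_sym).
(* the ordered edges are the pairs (x, par x) and (par x, x), x <> root *)
pose NR := [set x | x != root].
have card_NR : #|NR| = #|N|.-1.
  by rewrite -(cardsC1 root); apply: eq_card => x; rewrite !inE.
have up_inj : injective (fun x => (x, par x)) by move=> x y [].
have down_inj : injective (fun x => (par x, x)) by move=> x y [].
have -> : [set p : N * N | ptree p.1 p.2] =
          [set (x, par x) | x in NR] :|: [set (par x, x) | x in NR].
  apply/setP => [[a b]]; rewrite !inE /ptree /=; apply/orP/orP.
    by case=> /andP [xr /eqP ->]; [left|right]; apply: imset_f; rewrite inE.
  by case=> /imsetP [x]; rewrite inE => xr [-> ->]; [left|right]; rewrite xr eqxx.
have disjoint_dirs : [set (x, par x) | x in NR] :&: [set (par x, x) | x in NR] = set0.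
  apply/setP => [[a b]]; rewrite !inE; apply/negbTE/negP => /andP [].
  case/imsetP => x; rewrite inE => xr [-> ->].
  case/imsetP => y; rewrite inE => yr [x_py px_y].
  have := dep_par xr; rewrite px_y x_py => lt_y_py.
  by have := ltn_trans lt_y_py (dep_par yr); rewrite ltnn.
by rewrite cardsU !card_imset // disjoint_dirs cards0 subn0 card_NR addnn.
Qed.

End ParentTree.

Section BouquetTree.
Variable n : nat.

(* The decomposition tree of the bouquet: T is the graph itself with
   singleton bags, each block i being the path (i,2)-(i,1)-(i,0)-hub. *)
Definition bpar (x : BV n) : BV n :=
  if x is Some (i, k) then (if val k is j.+1 then Some (i, inord j) else None) else None.

Definition bdep (x : BV n) : nat := if x is Some (_, k) then (val k).+1 else 0.

Lemma bdep_par x : x != None -> bdep (bpar x) < bdep x.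
Proof.
by case: x => [[i [[|j] lt_j3]]|] //= _; rewrite inordK // (ltn_trans _ lt_j3).
Qed.

Definition btree : rel (BV n) := ptree None bpar.

Definition in_block (i : 'I_n) (y : BV n) : bool :=
  if y is Some (j, _) then j == i else false.

Lemma bpar_block i y : in_block i y -> (bpar y == None) || in_block i (bpar y).
Proof. by case: y => [[j [[|k] lt_k3]]|] //= /eqP ->; rewrite eqxx orbT. Qed.

Lemma btree_del_sym t : symmetric (del_node btree t).
Proof. by move=> a b; rewrite /del_node /btree ptree_sym [(a != t) && _]andbC. Qed.

Lemma block_to_hub t i k : t != None -> ~~ in_block i t ->
  connect (del_node btree t) (Some (i, k)) None.
Proof.
move=> t_hub t_out; apply: (climb bdep_par (Q := fun y => (y == None) || in_block i y)).
  by apply/orP; right; rewrite /= eqxx.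
move=> y /orP [/eqP ->|y_i _]; first by rewrite eqxx.
have y_hub : y != None by case: y y_i.
rewrite y_hub bpar_block //= /del_node /btree ptree_par //=.
have yt : y != t by apply: contraNneq t_out => <-.
rewrite yt /=; case/orP: (bpar_block y_i) => [/eqP ->|py_i]; first by rewrite eq_sym.
by apply: contraNneq t_out => <-.
Qed.

Lemma block_to_base t i k : ~~ in_block i t ->
  connect (del_node btree t) (Some (i, k)) (Some (i, ord0)).
Proof.
move=> t_out; apply: (climb bdep_par (Q := in_block i)); first by rewrite /= eqxx.
move=> [[j [[|l] lt_l3]]|] //= /eqP ji.
  by case/negP; rewrite ji; apply/eqP; congr (Some (_, _)); apply: val_inj.
move=> _; rewrite ji eqxx /= /del_node /btree.
rewrite (@ptree_par _ None bpar (Some (i, Ordinal lt_l3))) //=.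
by apply/andP; split; apply: contraNneq t_out => <- /=.
Qed.

Definition near (t : BV n) : {set BV n} :=
  if t is Some (i, _) then None |: [set Some (i, k) | k : 'I_3] else [set None].

Lemma card_near t : #|near t| <= 4.
Proof.
case: t => [[i k]|]; last by rewrite /= cards1.
rewrite /= cardsU1 -[4]/(1 + 3); apply: leq_add; first exact: leq_b1.
by apply: leq_trans (leq_imset_card _ _) _; rewrite card_ord.
Qed.

Lemma far_edge_connected t x y : bouquet x y -> y != t -> x \notin near t ->
  connect (del_node btree t) x y.
Proof.
case: x => [[i k]|]; last by case: t => [[j l]|] /=; rewrite !inE eqxx.
case: t => [[j l]|] /= xy yt.
  rewrite !inE negb_or /= => x_far.
  have i_j : ~~ in_block i (Some (j, l)).
    by apply: contraNN x_far => /= /eqP ji; apply/imsetP; exists k; rewrite // ji.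
  apply: connect_trans (block_to_hub k (isT : Some (j, l) != None) i_j) _.
  case: y xy yt => [[i' k']|] //= /andP [/eqP ii' _] _.
  by rewrite (sym_connect_sym (btree_del_sym _)); apply: block_to_hub; rewrite -?ii'.
case: y xy yt => [[i' k']|] //= /andP [/eqP ii' _] _ _.
apply: connect_trans (block_to_base k (isT : ~~ in_block i None)) _.
by rewrite (sym_connect_sym (btree_del_sym _)) -ii'; apply: block_to_base.
Qed.

(* Hence every crossing edge at t has both ends near t: cross(t) <= 16/2. *)
Lemma btree_cross t : cross (@bouquet n) btree id t <= 8.
Proof.
rewrite /cross; apply: leq_trans (leq_div2r 2 (_ : _ <= 16)) _ => //.
apply: leq_trans (subset_leq_card (_ : _ \subset setX (near t) (near t))) _.
  apply/subsetP => [[x y]]; rewrite !inE /= => /and4P [xy xt yt not_conn].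
  apply/andP; split; apply: contraNT not_conn => far; first exact: far_edge_connected.
  rewrite (sym_connect_sym (btree_del_sym _)).
  by apply: far_edge_connected; rewrite // bouquet_sym.
by rewrite cardsX -[16]/(4 * 4); apply: leq_mul; apply: card_near.
Qed.

Lemma bouquet_ecrw alpha : 0 < alpha -> ecrw_le alpha (@bouquet n) 8.
Proof.
move=> alpha_pos; exists (BV n), btree, id; split.
- exact: ptree_is_tree bdep_par.
- move=> t; rewrite /bag (_ : [set v | id v == t] = [set t]) ?cards1 //.
  by apply/setP => v; rewrite !inE.
- exact: btree_cross.
Qed.

End BouquetTree.

Lemma unbounded_by_ecrw (width_le : forall V : finType, rel V -> nat -> Prop)
    alpha : 0 < alpha ->
  (forall n, exists w, width_le _ (@bouquet n) w) ->
  (forall n w, width_le _ (@bouquet n) w -> (3 * n).+1 <= w * w) ->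
  ~ exists f : nat -> nat,
      forall (V : finType) (e : rel V), simple_graph e ->
      forall k w, is_ecrw alpha e k ->
      (width_le V e w /\ forall w', width_le V e w' -> w <= w') -> w <= f k.
Proof.
move=> alpha_pos width_finite width_lb [f f_bound].
pose M := \max_(j < 9) f j; pose n := M * M.
have [k [ecrw_k k_min]] := exists_minimum (ex_intro _ 8 (bouquet_ecrw n alpha_pos)).
have k_small : k < 9 by rewrite ltnS; apply: k_min; exact: bouquet_ecrw.
have [w [width_w w_min]] := exists_minimum (width_finite n).
have w_M : w <= M.
  have := f_bound _ _ (bouquet_simple n) k w (conj ecrw_k k_min) (conj width_w w_min).
  move/leq_trans; apply.
  exact: (@leq_bigmax _ (fun j : 'I_9 => f j) (Ordinal k_small)).
have := width_lb n w width_w; have := leq_mul w_M w_M; rewrite /n; lia.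
Qed.

Theorem lemma3p7 (alpha : nat) (Halpha : 0 < alpha) :
  (~ exists f : nat -> nat,
       forall (V : finType) (e : rel V), simple_graph e ->
       forall k w, is_ecrw alpha e k -> is_stcw e w -> w <= f k) /\
  (~ exists f : nat -> nat,
       forall (V : finType) (e : rel V), simple_graph e ->
       forall k w, is_ecrw alpha e k -> is_tcw e w -> w <= f k).
Proof.
split.
- exact: (unbounded_by_ecrw Halpha (fun n => stcw_finite (@bouquet n)) bouquet_stcw_lb).
- exact: (unbounded_by_ecrw Halpha (fun n => tcw_finite (@bouquet n)) bouquet_tcw_lb).
Qed.
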